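(* Let $S,T\subseteq\mathbb{Z}_{>0}$ be finite with $T\preceq S$ and $|T|>|S|$. Let $y\in T$ be the smallest element such that $T\setminus\{y\}\preceq S$. Then: (1) for every $j$ with $T(j)<y$, $(T\triangleleft S)(j)=T(j)$; (2) $y\notin T\triangleleft S$; (3) for every $S'\subseteq S$, $(T\setminus\{y\})\triangleleft S'=T\triangleleft S'$.
   Context: For a finite set $S\subseteq\mathbb{Z}_{>0}$, $S(i)$ denotes its $i$th smallest element. $T\preceq S$ means $|T|\ge|S|$ and $T(i)<S(i)$ for all $i\in[|S|]$. For finite $S,T$, $T\triangleleft S$ is computed by going through $S$ from largest to smallest; each $s$ picks the largest element of $T$ less than $s$ not yet picked (if one exists); $T\triangleleft S$ is the set of picked elements. *)

From mathcomp Require Import all_boot finmap.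
Set Implicit Arguments. Unset Strict Implicit. Unset Printing Implicit Defensive.
Local Open Scope fset_scope.

(* S(i): the i-th smallest element of S, 1-indexed (meaningful for 1 <= i <= #|S|). *)
Definition elem (S : {fset nat}) (i : nat) : nat :=
  nth 0 (sort leq (enum_fset S)) i.-1.

Definition prec (T S : {fset nat}) : Prop :=
  (#|` S| <= #|` T|)%N /\
  forall i : nat, (1 <= i <= #|` S|)%N -> (elem T i < elem S i)%N.

(* One step of T ◁ S: element s picks the largest not-yet-picked t in T with t < s. *)
Definition tri_step (T : {fset nat}) (P : {fset nat}) (s : nat) : {fset nat} :=
  let c := [seq t <- sort leq (enum_fset T) | (t < s)%N && (t \notin P)] in
  if c is [::] then P else (last 0 c) |` P.

Definition tri (T S : {fset nat}) : {fset nat} :=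
  foldl (tri_step T) fset0 (rev (sort leq (enum_fset S))).

From mathcomp Require Import all_boot finmap zify.
Set Implicit Arguments. Unset Strict Implicit. Unset Printing Implicit Defensive.
Local Open Scope fset_scope.
Local Open Scope nat_scope.

(* T ⪯ S amounts to a Hall-type counting condition: for every a, at most as
   many elements of S lie in [0, a] as elements of T lie in [0, a).  The
   minimality of y says that T has no more elements below y than S has up to
   y: otherwise the largest element of T below y could be removed instead.
   The greedy construction of T ◁ S' (S' ⊆ S) scans S' downwards.  While
   s > y, the condition T \ {y} ⪯ S, together with that count,
   leaves an unpicked element of T in (y, s), so the pick lies above y; once
   s ≤ y every pick lies below y, and for S' = S there are enough such steps
   to exhaust the elements of T below y.  Hence y is never picked, removing
   it from T does not change any step, and T ◁ S agrees with T below y. *)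

Section CountFset.
Variable K : choiceType.
Implicit Types (X Y : {fset K}) (p q : pred K).

Lemma leq_count_fset X Y p q :
  (forall x, x \in X -> p x -> q x && (x \in Y)) ->
  count p (enum_fset X) <= count q (enum_fset Y).
Proof.
move=> pq; rewrite -!size_filter; apply: uniq_leq_size; first exact/filter_uniq/fset_uniq.
by move=> x; rewrite !mem_filter => /andP[px /pq/(_ px)].
Qed.

Lemma count_fsetD1 X x p : x \in X ->
  count p (enum_fset X) = count p (enum_fset (X `\ x)) + p x.
Proof.
move=> xX; have Xx : perm_eq (enum_fset X) (x :: enum_fset (X `\ x)).
  apply: uniq_perm; first exact: fset_uniq.
    by rewrite /= fset_uniq !inE eqxx.
  by move=> z; rewrite inE !in_fsetD1; case: eqVneq => // ->.
by rewrite (permP Xx) /= addnC.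
Qed.

Lemma count_fset_comprehension X p q :
  count p (enum_fset [fset x in X | q x]) = count (predI p q) (enum_fset X).
Proof.
apply/eqP; rewrite eqn_leq !leq_count_fset // => x; rewrite !inE /=.
  by move=> xX /andP[-> ->]; rewrite andbT.
by move=> /andP[xX ->] ->.
Qed.

End CountFset.

Lemma count_predI_predC (T : Type) (p q : pred T) (s : seq T) :
  count p s = count (predI p q) s + count (predI p (predC q)) s.
Proof. by elim: s => //= x s ->; case: (p x); case: (q x) => /=; lia. Qed.

Lemma sorted_nth_lt (s : seq nat) i a : sorted ltn s -> i < size s ->
  (nth 0 s i < a) = (i < count (fun x => x < a) s).
Proof.
elim: s i => // h s IH i h_s.
have s_gt_h : all (ltn h) s := order_path_min ltn_trans h_s.
have [ha | ah] := ltnP h a.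
  by case: i => [|i] /= i_lt; rewrite ha add1n ltnS // IH ?(path_sorted h_s).
have none_lt : count (fun x => x < a) s = 0.
  apply/eqP; rewrite -leqn0 leqNgt -has_count; apply/hasPn => x /(allP s_gt_h) hx.
  by rewrite -leqNgt (leq_trans ah (ltnW hx)).
rewrite /= none_lt (ltnNge h a) ah addn0 ltn0.
case: i => [|i] /= i_lt; apply/negbTE; rewrite -leqNgt //.
exact: leq_trans ah (ltnW (allP s_gt_h _ (mem_nth 0 i_lt))).
Qed.

Lemma elem_ltE (X : {fset nat}) i a : 0 < i <= #|` X| ->
  (elem X i < a) = (i <= count (fun x => x < a) (enum_fset X)).
Proof.
case: i => // i /= iX; rewrite /elem /= sorted_nth_lt ?size_sort ?count_sort //.
by rewrite ltn_sorted_uniq_leq sort_uniq fset_uniq sort_sorted //; exact: leq_total.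
Qed.

Definition dominated (r s : seq nat) :=
  forall a, count (fun u => u <= a) r <= count (fun t => t < a) s.

Lemma precP (X U : {fset nat}) :
  prec X U <-> #|` U| <= #|` X| /\ dominated (enum_fset U) (enum_fset X).
Proof.
split=> -[UX H]; split=> //.
- move=> a; set c := count _ _; have [->//|c_gt0] := posnP c.
  have cU : c <= #|` U| := count_size _ _.
  have Uc : elem U c < a.+1 by rewrite elem_ltE ?c_gt0.
  rewrite -elem_ltE ?c_gt0 ?(leq_trans cU UX) //.
  by apply: leq_trans (H c _) _; rewrite ?c_gt0.
- move=> i /andP[i_gt0 iU].
  rewrite elem_ltE ?i_gt0 ?(leq_trans iU UX) //; apply: leq_trans (H _).
  by move: (leqnn (elem U i).+1); rewrite elem_ltE ?i_gt0.
Qed.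

Lemma elem_eq_below (X Y : {fset nat}) a i :
  (forall z, z < a -> (z \in X) = (z \in Y)) -> 0 < i <= #|` X| -> elem X i < a ->
  elem Y i = elem X i.
Proof.
move=> XY iX Xi_lt; have /andP[i_gt0 _] := iX.
have count_eq b : b <= a ->
    count (fun x => x < b) (enum_fset X) = count (fun x => x < b) (enum_fset Y).
  move=> ba; apply/eqP; rewrite eqn_leq !leq_count_fset // => z zin zb.
    by rewrite zb (XY z (leq_trans zb ba)).
  by rewrite zb -(XY z (leq_trans zb ba)).
have iYa : i <= count (fun x => x < a) (enum_fset Y) by rewrite -count_eq // -elem_ltE.
have iY : 0 < i <= #|` Y| by rewrite i_gt0 (leq_trans iYa (count_size _ _)).
have Yi_lt : elem Y i < a by rewrite elem_ltE.
have le1 : elem Y i < (elem X i).+1.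
  by rewrite (elem_ltE _ iY) -count_eq // -(elem_ltE _ iX).
have le2 : elem X i < (elem Y i).+1.
  by rewrite (elem_ltE _ iX) count_eq // -(elem_ltE _ iY).
by apply: anti_leq; rewrite -ltnS le1 -ltnS le2.
Qed.

Lemma sorted_leq_last (h : nat) s :
  sorted leq (h :: s) -> {in h :: s, forall t, t <= last h s}.
Proof.
elim: s h => [|h' s IH] h /=; first by move=> _ t; rewrite inE => /eqP->.
move=> /andP[hh' h's] t; rewrite inE => /predU1P[->|]; last exact: IH.
exact: leq_trans hh' (IH _ h's _ (mem_head _ _)).
Qed.

Variant tri_step_spec (T P : {fset nat}) (s : nat) : {fset nat} -> Prop :=
  | TriStepNone of (forall t, t \in T -> t < s -> t \in P) : tri_step_spec T P s P
  | TriStepPick x of x \in T & x < s & x \notin P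
      & (forall t, t \in T -> t < s -> t \notin P -> t <= x) :
      tri_step_spec T P s (x |` P).

Lemma tri_stepP T P s : tri_step_spec T P s (tri_step T P s).
Proof.
rewrite /tri_step; set c := [seq t <- _ | _].
have c_sorted : sorted leq c.
  by apply/sorted_filter/sort_sorted; [exact: leq_trans | exact: leq_total].
have mem_c t : (t \in c) = [&& t < s, t \notin P & t \in T].
  by rewrite mem_filter mem_sort andbA.
clearbody c; case: c c_sorted mem_c => [|h c] c_sorted mem_c.
  constructor=> t tT ts; apply/negPn/negP => tP.
  by have := mem_c t; rewrite inE tT ts tP.
have := mem_last h c; rewrite mem_c => /and3P[xs xP xT].
constructor=> // t tT ts tP.
by apply: (sorted_leq_last c_sorted); rewrite mem_c ts tP.
Qed.

Lemma tri_step_sub T P s : P `<=` tri_step T P s.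
Proof. by case: tri_stepP => [_ | x *]; [exact: fsubset_refl | exact: fsubsetU1]. Qed.

Lemma foldl_tri_step_sub T P r : P `<=` foldl (tri_step T) P r.
Proof.
elim: r P => [|s r IH] P /=; first exact: fsubset_refl.
exact: fsubset_trans (tri_step_sub T P s) (IH _).
Qed.

Lemma tri_step_fsetD1 T P s y : y \notin tri_step T P s ->
  tri_step (T `\ y) P s = tri_step T P s.
Proof.
case: (tri_stepP T) => [noT | x xT xs xP xmax] yn;
  case: tri_stepP => [noTy | x' x'Ty x's x'P x'max] //.
- by move: x'Ty; rewrite in_fsetD1 => /andP[_ /noT/(_ x's)]; rewrite (negPf x'P).
- have yx : y != x by move: yn; rewrite in_fset1U negb_or => /andP[].
  by have := noTy x; rewrite in_fsetD1 eq_sym yx xT (negPf xP) => /(_ isT xs).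
- have yx : y != x by move: yn; rewrite in_fset1U negb_or => /andP[].
  have x'T : x' \in T by move: x'Ty; rewrite in_fsetD1 => /andP[].
  have xTy : x \in T `\ y by rewrite in_fsetD1 eq_sym yx.
  by rewrite (@anti_leq x' x) // xmax // x'max.
Qed.

Lemma foldl_tri_step_fsetD1 T y P r : y \notin foldl (tri_step T) P r ->
  foldl (tri_step (T `\ y)) P r = foldl (tri_step T) P r.
Proof.
elim: r P => [|s r IH] P //= yn.
have ys : y \notin tri_step T P s.
  by apply: contra yn; apply: (fsubsetP (foldl_tri_step_sub _ _ _)).
by rewrite tri_step_fsetD1 // IH.
Qed.

Lemma dominated_pick (A : {fset nat}) u r x :
  sorted geq (u :: r) -> dominated (u :: r) (enum_fset A) ->
  x \in A -> x < u -> (forall t, t \in A -> t < u -> t <= x) ->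
  dominated r (enum_fset (A `\ x)).
Proof.
move=> ur_sorted dom xA xu xmax a.
have size_r : count (fun v => v <= u) r = size r.
  by apply/eqP; rewrite -all_count; exact: order_path_min (rev_trans leq_trans) ur_sorted.
have dom_u := dom u; rewrite /= leqnn size_r in dom_u.
have Ex := count_fsetD1 (fun t : nat => t < a) xA.
have dom_a := dom a; have r_a := count_size (fun v => v <= a) r.
rewrite /= in Ex dom_a; case: (leqP u a) => ua.
  by rewrite (leq_trans xu ua) in Ex; rewrite ua in dom_a; lia.
rewrite (leqNgt u a) ua in dom_a.
case: (ltnP x a) => xa; last by rewrite (ltnNge x a) xa in Ex; lia.
rewrite xa in Ex.
have : count (fun t => t < u) (enum_fset A) <= count (fun t => t < a) (enum_fset A).
  apply: leq_count_fset => z zA zu; rewrite zA andbT.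
  exact: leq_ltn_trans (xmax z zA zu) xa.
lia.
Qed.

Lemma foldl_tri_step_pool (T Q P : {fset nat}) r :
  Q `<=` T -> sorted geq r ->
  (forall t w u, t \in T -> t \notin Q -> w \in Q -> u \in r -> t < u -> t < w) ->
  dominated r (enum_fset (Q `\` P)) ->
  foldl (tri_step T) P r `<=` P `|` Q /\ #|` foldl (tri_step T) P r| = #|` P| + size r.
Proof.
move=> QT; elim: r P => [|u r IH] P /= r_sorted Q_above dom.
  by rewrite fsubsetUl addn0.
have dom_u := dom u; rewrite /= leqnn in dom_u.
have [w wQP wu] : exists2 w, w \in Q `\` P & w < u.
  by apply/hasP; rewrite has_count; apply: leq_trans (leq_addr _ _) dom_u.
have /andP[wP wQ] : (w \notin P) && (w \in Q) by rewrite -in_fsetD.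
case: tri_stepP => [noT | x xT xu xP xmax].
  by have := noT w (fsubsetP QT w wQ) wu; rewrite (negPf wP).
have xQ : x \in Q.
  apply/negPn/negP => xQ; have := Q_above x w u xT xQ wQ (mem_head _ _) xu.
  by rewrite ltnNge xmax // (fsubsetP QT).
have xQP : x \in Q `\` P by rewrite in_fsetD xP xQ.
have dom' : dominated r (enum_fset (Q `\` (x |` P))).
  have -> : Q `\` (x |` P) = (Q `\` P) `\ x.
    by apply/fsetP => z; rewrite !inE; case: eqVneq.
  apply: dominated_pick r_sorted dom xQP xu _ => t.
  by rewrite in_fsetD => /andP[tP /(fsubsetP QT) tT] tu; exact: xmax.
have Q_above' t w' u' : t \in T -> t \notin Q -> w' \in Q -> u' \in r -> t < u' -> t < w'.
  by move=> tT tQ w'Q u'r; apply: Q_above; rewrite // inE u'r orbT.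
have [sub card] := IH (x |` P) (path_sorted r_sorted) Q_above' dom'.
split; last by rewrite card cardfsU1 xP add1n addSnnS.
apply: fsubset_trans sub _; apply/fsubsetP => z.
by rewrite !inE => /orP[/orP[/eqP->|->]|->]; rewrite ?xQ ?orbT.
Qed.

Lemma sorted_geq_filter_cat y (l : seq nat) : sorted geq l ->
  [seq s <- l | y < s] ++ [seq s <- l | s <= y] = l.
Proof.
elim: l => //= h l IH h_l; have l_le_h := order_path_min (rev_trans leq_trans) h_l.
case: (ltnP y h) => [yh | hy] /=; first by rewrite IH ?(path_sorted h_l).
have l_le_y : all (fun s => s <= y) l.
  by apply: sub_all l_le_h => z zh; exact: leq_trans zh hy.
rewrite (eq_in_filter (a2 := pred0)) ?filter_pred0 /=; first by rewrite (all_filterP l_le_y).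
by move=> z /(allP l_le_y) zy; rewrite ltnNge zy.
Qed.

Section MinimalRemovable.
Variables (S T : {fset nat}) (y : nat).
Hypotheses (T_prec_S : prec T S) (S_lt_T : #|` S| < #|` T|) (yT : y \in T)
  (Ty_prec_S : prec (T `\ y) S) (y_min : forall z, z \in T -> prec (T `\ z) S -> y <= z).

Lemma count_lt_y :
  count (fun t => t < y) (enum_fset T) <= count (fun s => s <= y) (enum_fset S).
Proof.
have /precP[_ domT] := T_prec_S; have /precP[_ domTy] := Ty_prec_S.
rewrite leqNgt; apply/negP => few_S.
have [z zT zy] : exists2 z, z \in T & z < y.
  by apply/hasP; rewrite has_count; apply: leq_ltn_trans (leq0n _) few_S.
case: (tri_stepP T fset0 y) => [noT | x xT xy _ xmax].
  by have := noT z zT zy; rewrite in_fset0.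
(* x, the largest element of T below y, could be removed instead of y. *)
suff /(y_min xT) : prec (T `\ x) S by rewrite leqNgt xy.
apply/precP; split; first by move: S_lt_T; rewrite (cardfsD1 x T) xT; lia.
move=> a; have Ex := count_fsetD1 (fun t : nat => t < a) xT; rewrite /= in Ex.
have := domT a; case: (ltnP x a) => xa; last by rewrite ltnNge xa in Ex; lia.
rewrite xa in Ex; case: (leqP a y) => ay.
  have T_lt_a : count (fun t => t < y) (enum_fset T) <= count (fun t => t < a) (enum_fset T).
    apply: leq_count_fset => t tT ty; rewrite tT andbT.
    by apply: leq_ltn_trans (xmax t tT ty _) xa; rewrite in_fset0.
  have S_le_a : count (fun s => s <= a) (enum_fset S) <= count (fun s => s <= y) (enum_fset S).
    by apply: sub_count => s /= sa; exact: leq_trans sa ay.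
  lia.
have Ey := count_fsetD1 (fun t : nat => t < a) yT; rewrite /= ay in Ey.
have := domTy a; lia.
Qed.

Lemma dominated_above_y :
  dominated [seq s <- enum_fset S | y < s] (enum_fset [fset t in T | y < t]).
Proof.
move=> a; suff : count (fun s => (s <= a) && (y < s)) (enum_fset S) <=
                 count (fun t => (t < a) && (y < t)) (enum_fset T).
  by rewrite count_filter count_fset_comprehension.
have [ay | ya] := leqP a y.
  rewrite (eq_count (a2 := pred0)) ?count_pred0 // => s.
  by apply/negP => /andP[sa ys]; lia.
have split_S : count (fun s => s <= a) (enum_fset S) =
    count (fun s => (s <= a) && (y < s)) (enum_fset S) + count (fun s => s <= y) (enum_fset S).
  rewrite (count_predI_predC _ (fun s => y < s)); congr (_ + _); apply: eq_count => s /=.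
  by rewrite -leqNgt; apply/andb_idl => /leq_trans; apply; exact: ltnW.
have split_Ty : count (fun t => t < a) (enum_fset (T `\ y)) =
    count (fun t => (t < a) && (y < t)) (enum_fset T) + count (fun t => t < y) (enum_fset T).
  rewrite (count_predI_predC _ (fun t => y < t)); congr (_ + _).
    by rewrite [RHS](count_fsetD1 _ yT) /= ltnn andbF addn0.
  rewrite [RHS](count_fsetD1 _ yT) ltnn addn0; apply: eq_in_count => t.
  rewrite in_fsetD1 /= -leqNgt => /andP[ty _]; rewrite (ltn_neqAle t y) ty /=.
  by apply/andb_idl => /leq_ltn_trans; apply.
have /precP[_ domTy] := Ty_prec_S; have := domTy a; have := count_lt_y; lia.
Qed.

Lemma dominated_below_y :
  dominated [seq s <- enum_fset S | s <= y] (enum_fset [fset t in T | t < y]).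
Proof.
have /precP[_ domT] := T_prec_S.
move=> a; rewrite count_filter count_fset_comprehension.
have -> : count (predI (fun s => s <= a) (fun s => s <= y)) (enum_fset S) =
          count (fun s => s <= minn a y) (enum_fset S).
  by apply: eq_count => s; rewrite /= leq_min.
have -> : count (predI (fun t => t < a) (fun t => t < y)) (enum_fset T) =
          count (fun t => t < minn a y) (enum_fset T).
  by apply: eq_count => t; rewrite /= leq_min.
exact: domT.
Qed.

Lemma tri_phases S' : S' `<=` S ->
  exists2 R : {fset nat}, R `<=` [fset t in T | y < t] &
    [/\ R `<=` tri T S', tri T S' `<=` R `|` [fset t in T | t < y]
      & #|` tri T S'| = #|` R| + count (fun s => s <= y) (enum_fset S')].
Proof.
move=> S'S; set l := rev (sort leq (enum_fset S')).
have l_sorted : sorted geq l by rewrite rev_sorted; apply: sort_sorted; exact: leq_total.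
have count_l p : count p l = count p (enum_fset S') by rewrite count_rev count_sort.
have count_S' p : count p (enum_fset S') <= count p (enum_fset S).
  by apply: leq_count_fset => s sS' ps; rewrite ps (fsubsetP S'S).
set Q1 := [fset t in T | y < t]; set Q2 := [fset t in T | t < y].
have Q1_above t w u :
    t \in T -> t \notin Q1 -> w \in Q1 -> u \in [seq s <- l | y < s] -> t < u -> t < w.
  move=> tT tQ1 wQ1 _ _; move: tQ1 wQ1; rewrite !inE tT /= -leqNgt => ty /andP[_].
  exact: leq_ltn_trans ty.
have dom1 : dominated [seq s <- l | y < s] (enum_fset (Q1 `\` fset0)).
  move=> a; rewrite fsetD0; apply: leq_trans (dominated_above_y a).
  by rewrite !count_filter count_l.
have [R_Q1 R_card] := foldl_tri_step_pool (fset_sub _ _)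
  (sorted_filter (rev_trans leq_trans) _ l_sorted) Q1_above dom1.
set R := foldl _ fset0 _ in R_Q1 R_card; rewrite fset0U in R_Q1.
have R_above t : t \in R -> y < t by move=> /(fsubsetP R_Q1); rewrite inE => /andP[].
have Q2_above t w u :
    t \in T -> t \notin Q2 -> w \in Q2 -> u \in [seq s <- l | s <= y] -> t < u -> t < w.
  move=> tT tQ2 _; rewrite mem_filter => /andP[uy _] tu; move: tQ2.
  by rewrite !inE tT (leq_trans tu uy).
have dom2 : dominated [seq s <- l | s <= y] (enum_fset (Q2 `\` R)).
  move=> a; apply: leq_trans (leq_trans _ (dominated_below_y a)) _.
    by rewrite !count_filter count_l.
  apply: leq_count_fset => t tQ2 ta; rewrite ta in_fsetD tQ2 andbT.
  by apply: contraTN tQ2 => /R_above yt; rewrite !inE ltnNge (ltnW yt) andbF.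
have [tri_R tri_card] := foldl_tri_step_pool (fset_sub _ _)
  (sorted_filter (rev_trans leq_trans) _ l_sorted) Q2_above dom2.
exists R => //; rewrite /tri -/l -(sorted_geq_filter_cat y l_sorted) foldl_cat -/R.
split=> //; first exact: foldl_tri_step_sub.
by rewrite tri_card size_filter count_l R_card.
Qed.

Lemma notin_tri S' : S' `<=` S -> y \notin tri T S'.
Proof.
case/tri_phases=> R R_above [_ tri_sub _]; apply/negP => /(fsubsetP tri_sub).
by rewrite in_fsetU => /orP[/(fsubsetP R_above)|]; rewrite !inE ltnn andbF.
Qed.

Lemma tri_below_y z : z < y -> (z \in tri T S) = (z \in T).
Proof.
have [R R_above [R_tri tri_sub tri_card]] := tri_phases (fsubset_refl S).
set B := [fset t in T | t < y].
have D_B : tri T S `\` R `<=` B.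
  apply/fsubsetP => t; rewrite in_fsetD => /andP[tR /(fsubsetP tri_sub)].
  by rewrite in_fsetU (negPf tR).
have /eqP D_eq_B : tri T S `\` R == B.
  rewrite -(geq_leqif (fsubset_leqif_cards D_B)) cardfsDS // tri_card addKn.
  have -> : #|` B| = count (fun t => t < y) (enum_fset T).
    by rewrite -count_predT count_fset_comprehension.
  exact: count_lt_y.
move=> zy; apply/idP/idP => [/(fsubsetP tri_sub)|zT].
  by rewrite in_fsetU => /orP[/(fsubsetP R_above)|]; rewrite inE => /andP[].
have : z \in B by rewrite !inE zT zy.
by rewrite -D_eq_B in_fsetD => /andP[].
Qed.

End MinimalRemovable.

Theorem lemma4p17 (S T : {fset nat})
  (HSpos : forall x, x \in S -> (0 < x)%N)
  (HTpos : forall x, x \in T -> (0 < x)%N)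
  (HTS : prec T S) (Hcard : (#|` S| < #|` T|)%N)
  (y : nat) (Hy : y \in T) (Hyprec : prec (T `\ y) S)
  (Hymin : forall z, z \in T -> prec (T `\ z) S -> (y <= z)%N) :
  [/\ (forall j : nat, (1 <= j <= #|` T|)%N -> (elem T j < y)%N ->
         elem (tri T S) j = elem T j),
      y \notin tri T S
    & forall S' : {fset nat}, S' `<=` S -> tri (T `\ y) S' = tri T S'].
Proof.
have tri_y := notin_tri HTS Hcard Hy Hyprec Hymin.
split.
- move=> j Tj Tj_y; apply: elem_eq_below Tj Tj_y => z zy.
  by rewrite (tri_below_y HTS Hcard Hy Hyprec Hymin zy).
- exact: tri_y S (fsubset_refl S).
- by move=> S' S'S; rewrite /tri foldl_tri_step_fsetD1 //; exact: tri_y S' S'S.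
Qed.
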